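(* Let $(u,v)\in F^2$ with $(u,v)\sim_{AC}\mathrm{AK}(3)$, where $\mathrm{AK}(3)=(xyxy^{-1}x^{-1}y^{-1},\ x^3y^{-4})$. Then $(\varphi(u),\varphi(v))\sim_{AC}\mathrm{AK}(3)$ for every $\varphi\in\mathrm{Aut}(F)$.
   Context: $F=F(x,y)$ is the free group on $\{x,y\}$. $\mathrm{AK}(3)$ is the pair corresponding to the presentation $\langle x,y\mid xyx=yxy,\ x^3=y^4\rangle$. The Andrews–Curtis (AC) moves on a pair $(r_1,r_2)\in F^2$ are: replace $r_i$ by $r_ir_j$ ($i\ne j$); replace $r_i$ by $r_i^{-1}$; replace $r_i$ by $w^{-1}r_iw$ for some $w\in F$. Two pairs are AC-equivalent, $\sim_{AC}$, if one can be obtained from the other by a finite sequence of AC-moves. *)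

From mathcomp Require Import all_boot.
Set Implicit Arguments. Unset Strict Implicit. Unset Printing Implicit Defensive.

(* A letter is (is_y, is_inverse): (false,false)=x, (true,false)=y,
   (false,true)=x^-1, (true,true)=y^-1. *)
Definition letter := (bool * bool)%type.
Definition linv (a : letter) : letter := (a.1, ~~ a.2).

Definition lx : letter := (false, false).
Definition ly : letter := (true, false).
Definition lX : letter := (false, true).
Definition lY : letter := (true, true).

Definition reduced (s : seq letter) : bool :=
  if s is a :: t then path (fun a b => b != linv a) a t else true.

Definition cons_red (a : letter) (w : seq letter) : seq letter :=
  if w is b :: w' then (if b == linv a then w' else a :: w) else [:: a].

Definition red (w : seq letter) : seq letter := foldr cons_red [::] w.

Lemma reduced_cons_red a w : reduced w -> reduced (cons_red a w).
Proof.
case: w => [|b w] //= Hw.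
case: eqP => [_|Hb].
  by case: w Hw => //= c w /andP[].
by rewrite /= Hw andbT; apply/eqP.
Qed.

Lemma reduced_red w : reduced (red w).
Proof. by elim: w => [|a w IH] //=; apply: reduced_cons_red. Qed.

Definition F := { w : seq letter | reduced w }.

Definition of_word (w : seq letter) : F := exist _ (red w) (reduced_red w).

Definition oneF : F := of_word [::].
Definition mulF (u v : F) : F := of_word (proj1_sig u ++ proj1_sig v).
Definition invF (u : F) : F := of_word (rev (map linv (proj1_sig u))).

Definition is_aut (phi : F -> F) : Prop :=
  (forall a b, phi (mulF a b) = mulF (phi a) (phi b)) /\ bijective phi.

Inductive ac_move : F * F -> F * F -> Prop :=
  | ac_mul1 r1 r2 : ac_move (r1, r2) (mulF r1 r2, r2)
  | ac_mul2 r1 r2 : ac_move (r1, r2) (r1, mulF r2 r1)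
  | ac_inv1 r1 r2 : ac_move (r1, r2) (invF r1, r2)
  | ac_inv2 r1 r2 : ac_move (r1, r2) (r1, invF r2)
  | ac_conj1 r1 r2 w : ac_move (r1, r2) (mulF (mulF (invF w) r1) w, r2)
  | ac_conj2 r1 r2 w : ac_move (r1, r2) (r1, mulF (mulF (invF w) r2) w).

Inductive ac_equiv : F * F -> F * F -> Prop :=
  | ac_refl p : ac_equiv p p
  | ac_step p q r : ac_move p q -> ac_equiv q r -> ac_equiv p r.

Definition AK3 : F * F :=
  (of_word [:: lx; ly; lx; lY; lX; lY], of_word [:: lx; lx; lx; lY; lY; lY; lY]).

(** Nielsen's length-reduction argument: let (a, b) generate F. If some product of the
    images of two letters of different families is shorter than one of its factors, an
    elementary Nielsen transformation shortens the pair. Otherwise, either the cancellations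
    on the two sides of the image of a letter meet in its middle, and a conjugation followed
    by a Nielsen transformation shortens the pair, or they never meet; then the image of a
    reduced word of length at least two has length at least two, so x and y are images of
    letters and (a, b) is (x, y) up to order and inverses.
    Since every endomorphism preserves AC-equivalence, the automorphisms carrying AK(3) into
    its AC-class are closed under composition, and conjugations are AC-moves themselves. So
    it suffices to give explicit AC-move sequences for the swap (y, x), the inversion
    (x^-1, y) and the transvection (xy, y). *)

From mathcomp Require Import all_boot zify.
(* Imported last, so that [invF] is the inverse of F and not the one of fintype. *)
Set Implicit Arguments. Unset Strict Implicit. Unset Printing Implicit Defensive.

(** * Free reduction *)

Definition winv (w : seq letter) : seq letter := rev (map linv w).

Lemma linvK : involutive linv.
Proof. by case=> [[] []]. Qed.

Lemma linv_neq a : linv a != a.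
Proof. by case: a => [[] []]. Qed.

Lemma linv_fst a : (linv a).1 = a.1.
Proof. by []. Qed.

Lemma winvK : involutive winv.
Proof. by move=> w; rewrite /winv map_rev revK -map_comp (eq_map linvK) map_id. Qed.

Lemma winv_cat u v : winv (u ++ v) = winv v ++ winv u.
Proof. by rewrite /winv map_cat rev_cat. Qed.

Lemma winv_cons a w : winv (a :: w) = winv w ++ [:: linv a].
Proof. by rewrite /winv /= rev_cons cats1. Qed.

Lemma size_winv w : size (winv w) = size w.
Proof. by rewrite /winv size_rev size_map. Qed.

Lemma take_winv k w : take k (winv w) = winv (drop (size w - k) w).
Proof. by rewrite /winv take_rev size_map map_drop. Qed.

Lemma reduced_consE a w :
  reduced (a :: w) = reduced w && (if w is b :: _ then b != linv a else true).
Proof. by case: w => [|b w] //=; rewrite andbC. Qed.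

Lemma reduced_behead w : reduced w -> reduced (behead w).
Proof. by case: w => [|a [|b w]] //= /andP[]. Qed.

Lemma reduced_catl u v : reduced (u ++ v) -> reduced u.
Proof. by case: u => [|c u] //=; rewrite cat_path => /andP[]. Qed.

Lemma reduced_catr u v : reduced (u ++ v) -> reduced v.
Proof. by elim: u => [|c u IH] // /reduced_behead. Qed.

Lemma reduced_rcons w c :
  reduced (rcons w c) = reduced w && (if w is _ :: _ then c != linv (last c w) else true).
Proof. by case: w => [|b w] //=; rewrite rcons_path. Qed.

Lemma reduced_winv w : reduced w -> reduced (winv w).
Proof.
elim: w => [|a w IH] // rw.
rewrite winv_cons cats1 reduced_rcons IH ?(reduced_behead rw) //=.
case: w rw {IH} => [|b w] //= /andP[ba _].
rewrite winv_cons cats1 /= last_rcons.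
by case: (winv w) => [|c s] /=; rewrite ?last_rcons; apply: contra ba => /eqP ->; rewrite linvK.
Qed.

Lemma reduced_winv_cat w : w != [::] -> reduced (winv w ++ w) = false.
Proof.
case: w => [|c w] // _; apply/negP; rewrite winv_cons -catA /= => /reduced_catr.
by rewrite /= linvK eqxx.
Qed.

Lemma reduced_rcons_cat u a v :
  reduced (rcons u a) -> reduced (a :: v) -> reduced (rcons u a ++ v).
Proof. by case: u => [|c u] //= ru rv; rewrite cat_path ru last_rcons. Qed.

Lemma red_cons a w : red (a :: w) = cons_red a (red w).
Proof. by []. Qed.

Lemma cons_red_id a w : reduced (a :: w) -> cons_red a w = a :: w.
Proof. by case: w => [|b w] //= /andP[/negbTE ->]. Qed.

Lemma red_id w : reduced w -> red w = w.
Proof.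
elim: w => [|a w IH] // rw.
by rewrite red_cons IH ?(reduced_behead rw) // cons_red_id.
Qed.

Lemma cons_redK a w : reduced w -> cons_red a (cons_red (linv a) w) = w.
Proof.
case: w => [|b w] /=; first by rewrite eqxx.
by rewrite linvK; case: eqP => [->|_] rw; [rewrite cons_red_id | rewrite /= eqxx].
Qed.

Lemma red_cat u v : red (u ++ v) = foldr cons_red (red v) u.
Proof. by rewrite /red foldr_cat. Qed.

Lemma red_catr u v : red (u ++ red v) = red (u ++ v).
Proof. by rewrite !red_cat (red_id (reduced_red v)). Qed.

Lemma red_catl u v : red (red u ++ v) = red (u ++ v).
Proof.
have red_cons_red a w : reduced w -> red (cons_red a w ++ v) = cons_red a (red (w ++ v)).
  case: w => [|b w] rw //=; case: eqP => [->|_] //.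
  by rewrite cons_redK // reduced_red.
by elim: u => [|a u IH] //=; rewrite red_cons_red ?reduced_red // IH.
Qed.

Lemma red_winvK s t : red (winv s ++ s ++ t) = red t.
Proof.
elim: s t => [|a s IH] t //.
rewrite winv_cons -catA red_cat /= -[in cons_red a _](linvK a) cons_redK ?reduced_red //.
by rewrite -red_cat IH.
Qed.

Lemma red_winvKr s t : red (s ++ winv s ++ t) = red t.
Proof. by rewrite -{1}(winvK s) red_winvK. Qed.

Lemma red_cat_winvK u s v : red (u ++ winv s ++ s ++ v) = red (u ++ v).
Proof. by rewrite -red_catr red_winvK red_catr. Qed.

Lemma red_mid u w v : red (u ++ red w ++ v) = red (u ++ w ++ v).
Proof. by rewrite -red_catr red_catl red_catr. Qed.

Lemma size_red w : size (red w) <= size w.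
Proof.
elim: w => [|a w IH] //=; rewrite -/(red w).
by case: (red w) IH => [|c r] //= IH; case: eqP => _ /=; lia.
Qed.

Lemma of_wordK (g : F) : of_word (val g) = g.
Proof. by apply: val_inj; rewrite /= red_id //; case: g. Qed.

Lemma of_word_eq u v : red u = red v -> of_word u = of_word v.
Proof. by move=> E; apply: val_inj; rewrite /= E. Qed.

Lemma mulF_of_word u v : mulF (of_word u) (of_word v) = of_word (u ++ v).
Proof. by apply: of_word_eq; rewrite /= red_catl red_catr. Qed.

Lemma val_mulF g h : val (mulF g h) = red (val g ++ val h).
Proof. by []. Qed.

Lemma val_invF g : val (invF g) = winv (val g).
Proof. by rewrite /= red_id // reduced_winv //; case: g. Qed.

Lemma mulFA g h k : mulF (mulF g h) k = mulF g (mulF h k).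
Proof.
by rewrite -(of_wordK g) -(of_wordK h) -(of_wordK k) !mulF_of_word catA.
Qed.

Lemma mul1F g : mulF oneF g = g.
Proof. by rewrite -(of_wordK g) mulF_of_word. Qed.

Lemma mulF1 g : mulF g oneF = g.
Proof. by rewrite -(of_wordK g) mulF_of_word cats0. Qed.

Lemma mulVF g : mulF (invF g) g = oneF.
Proof. by apply: of_word_eq; rewrite val_invF -[_ ++ _]cats0 -catA red_winvK. Qed.

Lemma mulFV g : mulF g (invF g) = oneF.
Proof. by apply: of_word_eq; rewrite val_invF -[_ ++ _]cats0 -catA red_winvKr. Qed.

Lemma mulKF g h : mulF (invF g) (mulF g h) = h.
Proof. by rewrite -mulFA mulVF mul1F. Qed.

Lemma mulKVF g h : mulF g (mulF (invF g) h) = h.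
Proof. by rewrite -mulFA mulFV mul1F. Qed.

Lemma invF_unique g h : mulF h g = oneF -> h = invF g.
Proof. by move=> E; rewrite -(mulF1 h) -(mulFV g) -mulFA E mul1F. Qed.

Lemma invFK g : invF (invF g) = g.
Proof. by symmetry; apply: invF_unique; rewrite mulFV. Qed.

Lemma invFM g h : invF (mulF g h) = mulF (invF h) (invF g).
Proof. by symmetry; apply: invF_unique; rewrite mulFA mulKF mulVF. Qed.

Lemma invF1 : invF oneF = oneF.
Proof. by symmetry; apply: invF_unique; rewrite mulF1. Qed.

Lemma invF_of_word u : invF (of_word u) = of_word (winv u).
Proof.
symmetry; apply: invF_unique; rewrite mulF_of_word; apply: of_word_eq.
by rewrite -[_ ++ _]cats0 -catA red_winvK.
Qed.

Ltac group_simpl :=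
  do 2 rewrite ?mulFA ?mulKF ?mulKVF ?mulFV ?mulVF ?mulF1 ?mul1F ?invFM ?invFK ?invF1.

Definition len (g : F) : nat := size (val g).

Lemma len_invF g : len (invF g) = len g.
Proof. by rewrite /len val_invF size_winv. Qed.

(** * Endomorphisms *)

Definition limg (p : F * F) (l : letter) : F :=
  let g := if l.1 then p.2 else p.1 in if l.2 then invF g else g.

Definition wimg (p : F * F) (w : seq letter) : F :=
  foldr (fun l g => mulF (limg p l) g) oneF w.

Definition endo (p : F * F) (g : F) : F := wimg p (val g).

Definition X : F := of_word [:: lx].
Definition Y : F := of_word [:: ly].

Definition hom (phi : F -> F) := forall g h, phi (mulF g h) = mulF (phi g) (phi h).

Definition pmap (phi : F -> F) (p : F * F) : F * F := (phi p.1, phi p.2).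

Definition cnj (c g : F) : F := mulF (mulF (invF c) g) c.

Lemma limg_linv p l : limg p (linv l) = invF (limg p l).
Proof. by case: l => [[] []]; rewrite /limg /= ?invFK. Qed.

Lemma wimg_cat p u v : wimg p (u ++ v) = mulF (wimg p u) (wimg p v).
Proof. by elim: u => [|l u IH] /=; rewrite ?mul1F // IH mulFA. Qed.

Lemma wimg_red p w : wimg p (red w) = wimg p w.
Proof.
elim: w => [|l w IH] //=; rewrite -/(red w) -IH.
case: (red w) => [|c r] //=; case: eqP => [->|_] //=.
by rewrite limg_linv mulKVF.
Qed.

Lemma endo_of_word p w : endo p (of_word w) = wimg p w.
Proof. exact: wimg_red. Qed.

Lemma endo_hom p : hom (endo p).
Proof. by move=> g h; rewrite /endo val_mulF wimg_red wimg_cat. Qed.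

Lemma endoX p : endo p X = p.1.
Proof. by rewrite /endo /= mulF1. Qed.

Lemma endoY p : endo p Y = p.2.
Proof. by rewrite /endo /= mulF1. Qed.

Lemma hom1 phi : hom phi -> phi oneF = oneF.
Proof.
move=> phiM; have := phiM oneF oneF; rewrite mul1F => E.
by rewrite -(mulKF (phi oneF) (phi oneF)) -E mulVF.
Qed.

Lemma homV phi g : hom phi -> phi (invF g) = invF (phi g).
Proof. by move=> phiM; apply: invF_unique; rewrite -phiM mulVF hom1. Qed.

Lemma hom_limg phi p l : hom phi -> phi (limg p l) = limg (pmap phi p) l.
Proof. by move=> phiM; case: l => [[] []]; rewrite /limg /= ?homV. Qed.

Lemma of_word_letter l : of_word [:: l] = limg (X, Y) l.
Proof. by case: l => [[] []]; rewrite /limg /= ?invF_of_word. Qed.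

Lemma hom_endo phi g : hom phi -> phi g = endo (phi X, phi Y) g.
Proof.
move=> phiM; rewrite -(of_wordK g) endo_of_word.
elim: (val g) => [|l w IH] /=; first exact: hom1.
by rewrite -cat1s -mulF_of_word phiM IH of_word_letter hom_limg.
Qed.

Lemma endo_pmap phi p g : hom phi -> endo (pmap phi p) g = phi (endo p g).
Proof.
move=> phiM; have phi_endoM : hom (phi \o endo p) by move=> u v; rewrite /= endo_hom.
by rewrite -[RHS]/((phi \o endo p) g) (hom_endo g phi_endoM) /= endoX endoY.
Qed.

Lemma endo_XY g : endo (X, Y) g = g.
Proof. by rewrite -(hom_endo g (phi := id)). Qed.

Lemma cnj_hom c : hom (cnj c).
Proof. by move=> g h; rewrite /cnj; group_simpl. Qed.

Lemma cnjK c g : cnj (invF c) (cnj c g) = g.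
Proof. by rewrite /cnj; group_simpl. Qed.

Lemma limg_eq p l g : limg p l = g -> (if l.1 then p.2 else p.1) = if l.2 then invF g else g.
Proof. by case: l => c [] <- //=; rewrite invFK. Qed.

Lemma val_cnj c g : val (cnj c g) = red (winv (val c) ++ val g ++ val c).
Proof. by rewrite /cnj !val_mulF val_invF red_catl catA. Qed.

(** * Andrews-Curtis equivalence *)

Lemma ac_trans p q r : ac_equiv p q -> ac_equiv q r -> ac_equiv p r.
Proof. by elim=> // p1 p2 p3 M _ IH /IH; apply: ac_step. Qed.

Lemma ac_move_hom phi p q : hom phi -> ac_move p q -> ac_move (pmap phi p) (pmap phi q).
Proof. by move=> phiM [] *; rewrite /pmap /= ?phiM ?(homV _ phiM); constructor. Qed.

Lemma ac_equiv_hom phi p q : hom phi -> ac_equiv p q -> ac_equiv (pmap phi p) (pmap phi q).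
Proof.
move=> phiM; elim=> [r|p1 p2 p3 M _ IH]; first exact: ac_refl.
exact: ac_step (ac_move_hom phiM M) IH.
Qed.

Lemma ac_equiv_cnj c p q : ac_equiv p q -> ac_equiv (pmap (cnj c) p) q.
Proof.
case: p => r1 r2 H; apply: ac_step (ac_conj1 _ _ (invF c)) _.
by apply: ac_step (ac_conj2 _ _ (invF c)) _; rewrite /cnj; group_simpl.
Qed.

Inductive ac_op := Mul1 | Mul2 | Inv1 | Inv2 | Conj1 of seq letter | Conj2 of seq letter.

Definition ac_op_step (s : seq letter * seq letter) (o : ac_op) :=
  let: (w1, w2) := s in
  match o with
  | Mul1 => (red (w1 ++ w2), w2)
  | Mul2 => (w1, red (w2 ++ w1))
  | Inv1 => (red (winv w1), w2)
  | Inv2 => (w1, red (winv w2))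
  | Conj1 u => (red (winv u ++ w1 ++ u), w2)
  | Conj2 u => (w1, red (winv u ++ w2 ++ u))
  end.

Definition words_pair (s : seq letter * seq letter) : F * F := (of_word s.1, of_word s.2).

Lemma ac_move_step s o : ac_move (words_pair s) (words_pair (ac_op_step s o)).
Proof.
have of_word_red w : of_word (red w) = of_word w by apply: of_word_eq; rewrite red_id ?reduced_red.
case: s => w1 w2; case: o => [||||u|u]; rewrite /words_pair /= ?of_word_red.
- by rewrite -mulF_of_word; constructor.
- by rewrite -mulF_of_word; constructor.
- by rewrite -invF_of_word; constructor.
- by rewrite -invF_of_word; constructor.
- by rewrite catA -!mulF_of_word -invF_of_word; constructor.
- by rewrite catA -!mulF_of_word -invF_of_word; constructor.
Qed.

Lemma ac_equiv_run os s : ac_equiv (words_pair s) (words_pair (foldl ac_op_step s os)).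
Proof.
elim: os s => [|o os IH] s /=; first exact: ac_refl.
exact: ac_step (ac_move_step s o) (IH _).
Qed.

Definition fixes_AK3 (p : F * F) := ac_equiv (pmap (endo p) AK3) AK3.

Lemma fixes_AK3_run p os :
  foldl ac_op_step (val (endo p AK3.1), val (endo p AK3.2)) os = (val AK3.1, val AK3.2) ->
  fixes_AK3 p.
Proof.
move=> E; have := ac_equiv_run os (val (endo p AK3.1), val (endo p AK3.2)).
by rewrite E /words_pair !of_wordK.
Qed.

Lemma fixes_AK3_YX : fixes_AK3 (Y, X).
Proof.
apply: (fixes_AK3_run (os := [::
  Inv1; Conj2 [:: ly; ly]; Mul2; Conj2 [:: ly]; Conj2 [:: lX; lX; lX; lX; ly]; Mul2;
  Conj2 [:: ly; lx; ly]; Conj2 [:: lx; lY; lX; lX; lX; lX]; Conj1 [:: lx]; Mul2;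
  Conj2 [:: lX; ly; lx; ly]; Conj2 [:: lx; lx]; Conj1 [:: ly]; Mul2; Conj2 [:: lY; lX];
  Conj2 [:: lX; lX]; Conj1 [:: lx; lY; lX; lY; lx]; Mul2; Conj2 [:: lX; ly; lx];
  Conj2 [:: lx; lx; lx; lY]; Conj1 [:: ly; lx]; Mul2; Conj2 [:: lX; lY; lX];
  Conj1 [:: lY; lX; lY; lx]; Mul2; Conj2 [:: lX; ly; lx]; Conj1 [:: ly; lx; lY; lX; lY];
  Conj2 [:: lY]])).
by vm_compute.
Qed.

Lemma fixes_AK3_invX : fixes_AK3 (invF X, Y).
Proof.
apply: (fixes_AK3_run (os := [::
  Inv1; Mul2; Conj2 [:: lX]; Mul2; Conj2 [:: lX]; Conj2 [:: lX; lY; lY]; Conj1 [:: ly];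
  Mul2; Conj2 [:: lY; lX; ly]; Conj2 [:: ly; lx; lY; lX; lY]; Mul1; Inv1; Conj1 [:: ly];
  Mul2; Conj2 [:: lY; lX; ly; lx]; Conj1 [:: lx; ly; lX; lY; lX; lX; lY]; Mul2;
  Conj2 [:: ly; lx]; Inv1; Conj2 [:: lY]; Conj1 [:: ly; lx]; Mul2;
  Conj2 [:: lX; lY; lx; ly]; Conj2 [:: ly; lX; lY]; Mul1; Inv1; Conj1 [:: ly; lx]; Mul2;
  Conj2 [:: lX; lY; lx; ly; lx; lY]; Inv2; Conj1 [:: lY; lx; ly];
  Conj2 [:: lY; lX; ly; ly; lx; lY]; Mul1; Conj1 [:: ly; lX; lY]; Inv2;
  Conj1 [:: lX; ly; lx; lY; lx]; Conj2 [:: ly; lX; lY]; Mul1; Conj1 [:: ly; lx; lY];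
  Conj1 [:: lX; ly; lX]; Mul2; Conj2 [:: lY]; Mul1; Conj1 [:: ly; lx; lY; lx];
  Conj1 [:: lY; lx; ly]; Conj2 [:: lx; lx]; Mul1; Conj1 [:: lX; lX; ly; lx]; Inv2;
  Conj2 [:: lX; lX; ly; lx; lY]; Mul1; Conj1 [:: ly; lX; lY; lx]; Inv2; Conj1 [:: ly; ly];
  Conj2 [:: ly; lX; lY; lx; lx]; Mul1; Conj1 [:: lX; lX; ly; lx];
  Conj1 [:: lx; lY; lX; ly; ly; ly]; Mul2; Inv2; Conj2 [:: lY; lY; lY; lx; lx; lx]; Mul1;
  Conj1 [:: lX; lX]; Conj1 [:: ly; lx; lY; lX; lY]; Conj2 [:: lY; lY; lY; lY]])).
by vm_compute.
Qed.

Lemma fixes_AK3_mulXY : fixes_AK3 (mulF X Y, Y).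
Proof.
apply: (fixes_AK3_run (os := [::
  Inv1; Mul2; Conj2 [:: lx; ly]; Mul2; Conj2 [:: lx; ly]; Mul1; Conj1 [:: ly; lx]; Inv1;
  Conj1 [:: lY; lY; lX; ly; ly; ly]; Mul2; Inv1; Conj1 [:: lY; lY; lY; lx; ly; ly; ly; lX];
  Mul2; Conj2 [:: lx; lY; lY]; Mul1; Conj1 [:: lY]; Conj1 [:: lY; lY; lY];
  Conj2 [:: lx; lY; lX]; Mul1; Conj1 [:: lx; ly]; Conj2 [:: lY; lx; ly; lx; lY]; Mul1;
  Conj1 [:: ly; lX; lY]; Mul1; Inv1; Mul2; Inv2; Mul1; Inv1; Conj1 [:: lX; lY];
  Conj2 [:: lx; lY; lY; lY; lY]])).
by vm_compute.
Qed.

Lemma fixes_AK3_comp p q : fixes_AK3 q -> fixes_AK3 p -> fixes_AK3 (pmap (endo p) q).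
Proof.
move=> fq; apply: ac_trans; rewrite /fixes_AK3 /pmap /= !endo_pmap; try exact: endo_hom.
exact: ac_equiv_hom (endo_hom p) fq.
Qed.

Lemma fixes_AK3_XY : fixes_AK3 (X, Y).
Proof. by rewrite /fixes_AK3 /pmap !endo_XY; case: AK3 => *; apply: ac_refl. Qed.

Section NielsenClosure.
Variables a b : F.
Hypothesis ab_fixes : fixes_AK3 (a, b).

Lemma fixes_AK3_swap : fixes_AK3 (b, a).
Proof. by have := fixes_AK3_comp fixes_AK3_YX ab_fixes; rewrite /pmap /= endoX endoY. Qed.

Lemma fixes_AK3_invl : fixes_AK3 (invF a, b).
Proof.
have := fixes_AK3_comp fixes_AK3_invX ab_fixes.
by rewrite /pmap /= (homV _ (endo_hom _)) endoX endoY.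
Qed.

Lemma fixes_AK3_mulr : fixes_AK3 (mulF a b, b).
Proof.
by have := fixes_AK3_comp fixes_AK3_mulXY ab_fixes; rewrite /pmap /= endo_hom endoX endoY.
Qed.

End NielsenClosure.

Lemma fixes_AK3_invr a b : fixes_AK3 (a, b) -> fixes_AK3 (a, invF b).
Proof. by move/fixes_AK3_swap/fixes_AK3_invl/fixes_AK3_swap. Qed.

Lemma fixes_AK3_mulVr a b : fixes_AK3 (a, b) -> fixes_AK3 (mulF a (invF b), b).
Proof. by move/fixes_AK3_invr/fixes_AK3_mulr/fixes_AK3_invr; rewrite invFK. Qed.

Lemma fixes_AK3_mulVl a b : fixes_AK3 (a, b) -> fixes_AK3 (mulF (invF b) a, b).
Proof. by move/fixes_AK3_invl/fixes_AK3_mulr/fixes_AK3_invl; rewrite invFM invFK. Qed.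

Lemma fixes_AK3_mull a b : fixes_AK3 (a, b) -> fixes_AK3 (mulF b a, b).
Proof. by move/fixes_AK3_invr/fixes_AK3_mulVl/fixes_AK3_invr; rewrite invFK. Qed.

Lemma fixes_AK3_signed a b (s t : bool) : fixes_AK3 (a, b) ->
  fixes_AK3 (if s then invF a else a, if t then invF b else b).
Proof.
move=> ab; case: s; case: t.
- exact: fixes_AK3_invl (fixes_AK3_invr ab).
- exact: fixes_AK3_invl ab.
- exact: fixes_AK3_invr ab.
- exact: ab.
Qed.

(* The move (l1, l2) replaces the generator of the family of l1 by the product of the
   images of l1 and l2, inverted when l1 is an inverse letter: (x, y^-1) maps (a, b) to
   (a b^-1, b) and (x^-1, y) maps it to (b^-1 a, b). *)
Definition nielsen_gen (l1 l2 : letter) (p : F * F) : F :=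
  let g := mulF (limg p l1) (limg p l2) in if l1.2 then invF g else g.

Definition nielsen_move (l1 l2 : letter) (p : F * F) : F * F :=
  if l1.1 then (p.1, nielsen_gen l1 l2 p) else (nielsen_gen l1 l2 p, p.2).

Lemma nielsen_moveK l1 l2 p : l1.1 != l2.1 -> nielsen_move l1 (linv l2) (nielsen_move l1 l2 p) = p.
Proof.
case: p => a b; case: l1 => [[] []]; case: l2 => [[] []] //= _;
  by rewrite /nielsen_move /nielsen_gen /limg /=; group_simpl.
Qed.

Lemma nielsen_move_hom phi l1 l2 p :
  hom phi -> pmap phi (nielsen_move l1 l2 p) = nielsen_move l1 l2 (pmap phi p).
Proof.
move=> phiM; rewrite /nielsen_move /nielsen_gen.
by case: l1 => [[] []]; rewrite /pmap /= ?(homV _ phiM) phiM !(hom_limg _ _ phiM).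
Qed.

Lemma fixes_AK3_nielsen l1 l2 p : l1.1 != l2.1 -> fixes_AK3 p -> fixes_AK3 (nielsen_move l1 l2 p).
Proof.
case: p => a b; case: l1 => [[] []]; case: l2 => [[] []] //= _;
  rewrite /nielsen_move /nielsen_gen /limg /=; group_simpl.
- by move/fixes_AK3_swap/fixes_AK3_mull/fixes_AK3_swap.
- by move/fixes_AK3_swap/fixes_AK3_mulVl/fixes_AK3_swap.
- by move/fixes_AK3_swap/fixes_AK3_mulVr/fixes_AK3_swap.
- by move/fixes_AK3_swap/fixes_AK3_mulr/fixes_AK3_swap.
- exact: fixes_AK3_mull.
- exact: fixes_AK3_mulVl.
- exact: fixes_AK3_mulVr.
- exact: fixes_AK3_mulr.
Qed.

Lemma fixes_AK3_nielsenV l1 l2 p : l1.1 != l2.1 -> fixes_AK3 (nielsen_move l1 l2 p) -> fixes_AK3 p.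
Proof. by move=> l12; rewrite -{2}(nielsen_moveK p l12); apply: fixes_AK3_nielsen. Qed.

Lemma fixes_AK3_cnj c p : fixes_AK3 p -> fixes_AK3 (pmap (cnj c) p).
Proof.
rewrite /fixes_AK3; have -> : pmap (endo (pmap (cnj c) p)) AK3 = pmap (cnj c) (pmap (endo p) AK3).
  by rewrite {1}/pmap !endo_pmap //; apply: cnj_hom.
exact: ac_equiv_cnj.
Qed.

Lemma fixes_AK3_cnjV c p : fixes_AK3 (pmap (cnj c) p) -> fixes_AK3 p.
Proof. by move/(fixes_AK3_cnj (invF c)); rewrite /pmap /= !cnjK; case: p. Qed.

Definition generates (p : F * F) := forall g, exists h, endo p h = g.

Lemma generates_pmap p q : generates (pmap (endo q) p) -> generates q.
Proof.
move=> gen_qp g; have [h <-] := gen_qp g.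
by exists (endo p h); rewrite endo_pmap //; apply: endo_hom.
Qed.

Lemma generates_nielsen l1 l2 p : l1.1 != l2.1 -> generates p -> generates (nielsen_move l1 l2 p).
Proof.
move=> l12 gen_p; apply: (generates_pmap (p := nielsen_move l1 (linv l2) (X, Y))).
rewrite nielsen_move_hom; last exact: endo_hom.
by rewrite {1}/pmap endoX endoY -surjective_pairing nielsen_moveK.
Qed.

Lemma generates_cnj c p : generates p -> generates (pmap (cnj c) p).
Proof.
move=> gen_p g; have [h Eh] := gen_p (cnj (invF c) g).
exists h; rewrite endo_pmap; last exact: cnj_hom.
by rewrite Eh -{1}(invFK c) cnjK.
Qed.

Lemma len_limg_pair p l1 l2 : l1.1 != l2.1 -> len p.1 + len p.2 = len (limg p l1) + len (limg p l2).
Proof. by case: l1 => [[] []]; case: l2 => [[] []] //= _; rewrite /limg /= ?len_invF // addnC. Qed.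

Lemma len_nielsen_move l1 l2 p : l1.1 != l2.1 ->
  len (nielsen_move l1 l2 p).1 + len (nielsen_move l1 l2 p).2 =
  len (limg p l2) + len (mulF (limg p l1) (limg p l2)).
Proof.
case: l1 => [[] []]; case: l2 => [[] []] //= _;
  by rewrite /nielsen_move /nielsen_gen /limg /= ?len_invF // addnC.
Qed.

Definition odd_fam (fy : bool) (w : seq letter) : bool :=
  odd (count (fun l : letter => l.1 == fy) w).

Lemma odd_fam_cat fy u v : odd_fam fy (u ++ v) = odd_fam fy u (+) odd_fam fy v.
Proof. by rewrite /odd_fam count_cat oddD. Qed.

Lemma odd_fam_red fy w : odd_fam fy (red w) = odd_fam fy w.
Proof.
rewrite /odd_fam; elim: w => [|l w IH] //.
rewrite red_cons [count _ (l :: w)]/= oddD -IH.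
case: (red w) => [|c r] /=; first by rewrite addn0 addbF.
by case: ifP => [/eqP ->|_] /=; rewrite !oddD // addbA addbb.
Qed.

Lemma odd_fam_cons fy l w : odd_fam fy (l :: w) = (l.1 == fy) (+) odd_fam fy w.
Proof. by rewrite /odd_fam /= oddD oddb. Qed.

Lemma odd_fam_limg fy p l :
  odd_fam fy (val (limg p l)) = odd_fam fy (val (if l.1 then p.2 else p.1)).
Proof.
case: l => c [] //.
have -> : limg p (c, true) = invF (if c then p.2 else p.1) by [].
by rewrite val_invF /odd_fam /winv count_rev count_map.
Qed.

Lemma odd_fam_endo fy p g :
  odd_fam fy (val (endo p g)) =
  (odd_fam false (val g) && odd_fam fy (val p.1)) (+)
  (odd_fam true (val g) && odd_fam fy (val p.2)).
Proof.
rewrite /endo; elim: (val g) => [|l w IH] //=.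
rewrite odd_fam_red odd_fam_cat IH odd_fam_limg !odd_fam_cons.
by case: l.1; case: (odd_fam false w); case: (odd_fam true w);
  case: (odd_fam fy (val p.1)); case: (odd_fam fy (val p.2)).
Qed.

(* Count the letters of each family mod 2: if a = 1, the images of x and y have parities
   0 or that of b, but these parities are (1, 0) and (0, 1). *)
Lemma generates_len_gt0 p : generates p -> 0 < len p.1 /\ 0 < len p.2.
Proof.
case: p => a b gen_ab; have [hx Ex] := gen_ab X; have [hy Ey] := gen_ab Y.
have parity fy h g : endo (a, b) h = g -> odd_fam fy (val g) =
    (odd_fam false (val h) && odd_fam fy (val a)) (+) (odd_fam true (val h) && odd_fam fy (val b)).
  by move=> <-; rewrite odd_fam_endo.
have := parity false _ _ Ex; have := parity true _ _ Ex.
have := parity false _ _ Ey; have := parity true _ _ Ey.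
have [-> /negbTE-> /negbTE-> ->] : [/\ odd_fam false (val X), ~~ odd_fam true (val X),
  ~~ odd_fam false (val Y) & odd_fam true (val Y)] by [].
have odd_fam_nil fy : odd_fam fy [::] = false by [].
rewrite /len !lt0n !size_eq0.
case: (val a =P [::]) => [->|_]; case: (val b =P [::]) => [->|_]; rewrite ?odd_fam_nil //.
all: case: (odd_fam false (val hx)); case: (odd_fam true (val hx)).
all: case: (odd_fam false (val hy)); case: (odd_fam true (val hy)).
all: by rewrite ?andbF ?addbF ?addFb ?andbT //= => <-.
Qed.

(** * Cancellation between reduced words *)

Fixpoint lcp (T : eqType) (s t : seq T) : nat :=
  match s, t with
  | x :: s', y :: t' => if x == y then (lcp s' t').+1 else 0
  | _, _ => 0
  end.

Lemma lcp_leq (T : eqType) (s t : seq T) : lcp s t <= minn (size s) (size t).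
Proof.
elim: s t => [|x s IH] [|y t] //=; case: eqP => // _.
by rewrite minnSS ltnS IH.
Qed.

Lemma lcp_catr (T : eqType) (s t t' : seq T) : lcp s t < size t -> lcp s (t ++ t') = lcp s t.
Proof. by elim: s t => [|x s IH] [|y t] //=; case: eqP => // _ /IH ->. Qed.

Lemma lcp_take (T : eqType) (s t : seq T) j : lcp s t < j -> lcp s (take j t) = lcp s t.
Proof. by elim: s t j => [|x s IH] [|y t] [|j] //=; case: eqP => // _ /IH ->. Qed.

Lemma take_lcp (T : eqType) (s t : seq T) k : k <= lcp s t -> take k s = take k t.
Proof. by elim: s t k => [|x s IH] [|y t] [|k] //=; case: eqP => // -> /IH ->. Qed.

Definition canc (u v : seq letter) : nat := lcp (winv u) v.

Lemma canc_leq u v : canc u v <= size u /\ canc u v <= size v.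
Proof.
have := lcp_leq (winv u) v; rewrite size_winv -/(canc u v) leq_min.
by case/andP.
Qed.

Lemma canc_drop u v k : k <= canc u v -> drop (size u - k) u = winv (take k v).
Proof. by move/take_lcp; rewrite take_winv => <-; rewrite winvK. Qed.

Lemma red_cat_canc u v : reduced u -> reduced v ->
  red (u ++ v) = take (size u - canc u v) u ++ drop (canc u v) v.
Proof.
elim/last_ind: u v => [|u a IH] v ru rv; first by rewrite /= drop0 red_id.
have ru' : reduced u by move: ru; rewrite -cats1 => /reduced_catl.
have foldr_red w : reduced w -> foldr cons_red w u = red (u ++ w).
  by move=> rw; rewrite red_cat red_id.
rewrite /canc -cats1 winv_cat /= -catA red_cat /= (red_id rv).
case: v rv => [|b v] rv /=.
  by rewrite subn0 take_size cats0 foldr_red // red_id // cats1.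
case: (eqVneq b (linv a)) => [->|nb]; rewrite ?eqxx.
  have rv' := reduced_behead rv.
  rewrite foldr_red // IH // size_cat addn1 subSS /canc takel_cat //; exact: leq_subr.
have rav : reduced (a :: b :: v) by rewrite reduced_consE rv.
rewrite subn0 take_size drop0 foldr_red // red_id -?catA // -cat_rcons.
exact: reduced_rcons_cat.
Qed.

Lemma size_red_cat u v : reduced u -> reduced v ->
  size (red (u ++ v)) = size u + size v - 2 * canc u v.
Proof.
move=> ru rv; have [cu cv] := canc_leq u v.
by rewrite red_cat_canc // size_cat size_take size_drop; case: ltnP; lia.
Qed.

Lemma len_mulF g h : len (mulF g h) = len g + len h - 2 * canc (val g) (val h).
Proof. by rewrite /len val_mulF size_red_cat //; [case: g | case: h]. Qed.

(* Otherwise the middle letter of v would be its own inverse (size v odd), or v would be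
   t ++ winv t (size v even). *)
Lemma canc_self v : reduced v -> v != [::] -> 2 * canc v v < size v.
Proof.
move=> rv nv; rewrite ltnNge; apply/negP => le_v; set n := size v in le_v.
have n_eq := odd_double_half n.
have k_le : n - n./2 <= canc v v by case: (odd n) n_eq => /=; lia.
have E := canc_drop k_le; rewrite (_ : n - (n - n./2) = n./2) in E; last by lia.
set j := n./2 in n_eq E; case: (odd n) n_eq E => /= n_eq E.
  have size_t : size (take (n - j) v) = n - j by rewrite size_take -/n; case: ltnP; lia.
  have := congr1 (nth lx ^~ 0) E.
  rewrite /= nth_drop addn0 /winv nth_rev size_map size_t; last by lia.
  rewrite (nth_map lx) ?size_t; last by lia.
  rewrite nth_take; last by lia.
  have -> : n - j - 1 = j by lia.
  by move=> vj; move: (linv_neq (nth lx v j)); rewrite -vj eqxx.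
have j_gt0 : 0 < j by move: nv; rewrite -size_eq0 -/n; lia.
rewrite (_ : n - j = j) in E; last by lia.
have := reduced_winv_cat (w := drop j v).
rewrite -size_eq0 size_drop -/n; have -> : (n - j == 0) = false by lia.
have -> : winv (drop j v) = take j v by rewrite E winvK.
by rewrite cat_take_drop rv => /(_ isT).
Qed.

Lemma canc_overlap_winv u v k : reduced v -> size v = 2 * k -> 0 < k ->
  k <= canc u v -> k <= canc v (winv u) -> False.
Proof.
move=> rv size_v k_gt0 /canc_drop E1 /canc_drop E2.
rewrite take_winv E1 winvK size_v (_ : 2 * k - k = k) in E2; last by lia.
have := reduced_winv_cat (w := winv (take k v)).
rewrite winvK -E2 cat_take_drop rv -size_eq0 size_drop size_v => not_nil.
suff : true = false by []; apply: not_nil; lia.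
Qed.

Lemma canc_overlapE u v k : size v = 2 * k -> k <= canc u v -> k <= canc v u -> 2 * k <= size u ->
  u = winv (drop k v) ++ take (size u - 2 * k) (drop k u) ++ winv (take k v).
Proof.
move=> size_v /canc_drop E1 /canc_drop E2 le_u.
rewrite (_ : size v - k = k) in E2; last by lia.
have E3 : take k u = winv (drop k v) by rewrite E2 winvK.
rewrite -E3 -E1 -{1}(cat_take_drop k u); congr cat.
rewrite -{1}(cat_take_drop (size u - 2 * k) (drop k u)) drop_drop; congr (_ ++ drop _ _); lia.
Qed.

Section ReducedProduct.
Variable G : letter -> seq letter.
Hypothesis G_reduced : forall l, reduced (G l).
Hypothesis canc_lt_size : forall l1 l2, l2 != linv l1 ->
  canc (G l1) (G l2) < size (G l1) /\ canc (G l1) (G l2) < size (G l2).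
Hypothesis canc_disjoint : forall l1 l2 l3, l2 != linv l1 -> l3 != linv l2 ->
  canc (G l1) (G l2) + canc (G l2) (G l3) < size (G l2).

Definition gprod (w : seq letter) : seq letter := red (flatten (map G w)).

Let head_canc l w := if w is l' :: _ then canc (G l) (G l') else 0.

Let gprod_cons l w : reduced (l :: w) ->
  exists2 z, gprod (l :: w) = take (size (G l) - head_canc l w) (G l) ++ z
           & w != [::] -> 0 < size z.
Proof.
elim: w l => [|l' w IH] l rw.
  by exists [::]; rewrite // /gprod /= !cats0 subn0 take_size red_id.
have l'l : l' != linv l by move: rw; rewrite reduced_consE => /andP[].
have rw' := reduced_behead rw.
have [z' Ez' _] := IH l' rw'.
set t := take _ (G l') in Ez'.
have size_t : size t = size (G l') - head_canc l' w by rewrite size_take; case: ltnP; lia.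
have canc_t : canc (G l) (G l') < size t.
  rewrite size_t; case: w {IH Ez' size_t t} rw rw' => [|l'' w] rw rw' /=.
    by rewrite subn0; case: (canc_lt_size l'l).
  have l''l' : l'' != linv l' by move: rw'; rewrite reduced_consE => /andP[].
  by have := canc_disjoint l'l l''l'; lia.
have canc_tz : canc (G l) (t ++ z') = canc (G l) (G l').
  have canc_tE : canc (G l) t = canc (G l) (G l') by apply: lcp_take; rewrite -size_t.
  by rewrite /canc lcp_catr -/(canc (G l) t) canc_tE.
exists (drop (canc (G l) (G l')) (t ++ z')) => [|_]; last first.
  by rewrite size_drop size_cat; lia.
have -> : gprod [:: l, l' & w] = red (G l ++ gprod (l' :: w)) by rewrite /gprod red_catr.
by rewrite Ez' red_cat_canc ?canc_tz // -Ez' reduced_red.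
Qed.

Lemma size_gprod w : reduced w -> 1 < size w -> 1 < size (gprod w).
Proof.
case: w => [|l [|l' w]] // rw _.
have [z -> /(_ isT)] := gprod_cons rw.
rewrite size_cat size_take /=.
have l'l : l' != linv l by move: rw; rewrite reduced_consE => /andP[].
by have [lt_l _] := canc_lt_size l'l; case: (ltnP (size (G l) - _)); lia.
Qed.

End ReducedProduct.

(** * Nielsen reduction *)

Lemma letter_fst_eq (l1 l2 : letter) : l1.1 = l2.1 -> l2 = l1 \/ l2 = linv l1.
Proof. by case: l1 => [[] []]; case: l2 => [[] []]; auto. Qed.

Definition lword (p : F * F) (l : letter) : seq letter := val (limg p l).

Lemma lword_reduced p l : reduced (lword p l).
Proof. by rewrite /lword; case: (limg p l). Qed.

Lemma lword_linv p l : lword p (linv l) = winv (lword p l).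
Proof. by rewrite /lword limg_linv val_invF. Qed.

Lemma size_lword p l : size (lword p l) = len (if l.1 then p.2 else p.1).
Proof. by case: l => c [] //; apply: len_invF. Qed.

Lemma val_wimg p w : val (wimg p w) = gprod (lword p) w.
Proof. by elim: w => [|l w IH] //=; rewrite IH /gprod red_catr. Qed.

Definition no_shortening (p : F * F) := forall l1 l2 : letter, l1.1 != l2.1 ->
  len (limg p l1) <= len (mulF (limg p l1) (limg p l2)).

Lemma no_shortening_r p l1 l2 : no_shortening p -> l1.1 != l2.1 ->
  len (limg p l2) <= len (mulF (limg p l1) (limg p l2)).
Proof.
move=> ns l12; have := ns (linv l2) (linv l1); rewrite !linv_fst eq_sym => /(_ l12).
by rewrite !limg_linv -invFM !len_invF.
Qed.

Lemma canc_half p l1 l2 : no_shortening p -> 0 < len p.1 -> 0 < len p.2 -> l2 != linv l1 ->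
  [/\ 2 * canc (lword p l1) (lword p l2) <= size (lword p l1),
      2 * canc (lword p l1) (lword p l2) <= size (lword p l2) &
      l1.1 = l2.1 -> 2 * canc (lword p l1) (lword p l2) < size (lword p l2)].
Proof.
move=> ns a_gt0 b_gt0 l21; case: (eqVneq l1.1 l2.1) => [e12|l12].
  have -> : l2 = l1 by case: (letter_fst_eq e12) => // l2E; rewrite l2E eqxx in l21.
  have nil1 : lword p l1 != [::] by rewrite -size_eq0 size_lword; case: ifP; lia.
  by have lt1 := canc_self (lword_reduced p l1) nil1; split=> //; apply: ltnW.
have := ns _ _ l12; have := no_shortening_r ns l12.
rewrite !len_mulF -/(lword p l1) -/(lword p l2) /len -/(lword p l1) -/(lword p l2).
have [c1 c2] := canc_leq (lword p l1) (lword p l2).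
by move=> h1 h2; split; [lia | lia | move=> e12; rewrite e12 eqxx in l12].
Qed.

Definition no_overlap (p : F * F) := forall l1 l2 l3 : letter, l2 != linv l1 -> l3 != linv l2 ->
  canc (lword p l1) (lword p l2) + canc (lword p l2) (lword p l3) < size (lword p l2).

Lemma limg_of_len1 p g : generates p -> no_shortening p -> 0 < len p.1 -> 0 < len p.2 ->
  no_overlap p -> len g = 1 -> exists l, limg p l = g.
Proof.
move=> gen_p ns a_gt0 b_gt0 nov; have [h <-] := gen_p g; move=> len_g.
have size_gt0 l : 0 < size (lword p l) by rewrite size_lword; case: ifP.
have canc_lt l1 l2 : l2 != linv l1 -> canc (lword p l1) (lword p l2) < size (lword p l1) /\
    canc (lword p l1) (lword p l2) < size (lword p l2).
  move=> l21; have [c1 c2 _] := canc_half ns a_gt0 b_gt0 l21.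
  by have := size_gt0 l1; have := size_gt0 l2; lia.
have rh : reduced (val h) := valP h.
case: (leqP 2 (size (val h))) => [size_h | ].
  have := size_gprod (@lword_reduced p) canc_lt nov rh size_h.
  by rewrite -val_wimg; move: len_g; rewrite /len /endo => ->.
move: len_g; rewrite /endo; case: (val h) => [|l [|]] //= _ _.
by exists l; rewrite mulF1.
Qed.

Lemma fixes_AK3_letters p l l' : limg p l = X -> limg p l' = Y -> fixes_AK3 p.
Proof.
case: p => a b /limg_eq la /limg_eq lb.
have XY s t : (if s then invF X else X) != (if t then invF Y else Y) by case: s; case: t.
case: l la => [[] s] /= la; case: l' lb => [[] t] /= lb.
- by move: (XY s t); rewrite -la -lb eqxx.
- by rewrite la lb; apply/fixes_AK3_signed/fixes_AK3_swap/fixes_AK3_XY.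
- by rewrite la lb; apply/fixes_AK3_signed/fixes_AK3_XY.
- by move: (XY s t); rewrite -la -lb eqxx.
Qed.

Lemma len_cnj_prefix c h k : val c = take k (val h) -> len (cnj c h) <= len h.
Proof.
move=> ch; rewrite /len val_cnj ch -{2}(cat_take_drop k (val h)) -catA red_winvK.
by rewrite (leq_trans (size_red _)) // size_cat addnC -size_cat cat_take_drop.
Qed.

Lemma len_cnj_overlap g h c k : size (val h) = 2 * k -> k <= canc (val g) (val h) ->
  k <= canc (val h) (val g) -> 2 * k <= len g -> val c = take k (val h) ->
  len (cnj c (mulF h g)) = len g - 2 * k.
Proof.
move=> size_h kgh khg le_g ch.
have Eg := canc_overlapE size_h kgh khg le_g.
set m := take _ (drop k (val g)) in Eg.
have rm : reduced m by move: (valP g); rewrite Eg => /reduced_catr /reduced_catl.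
rewrite [LHS]/len val_cnj val_mulF red_mid ch {1}Eg -{2}(cat_take_drop k (val h)) -!catA.
rewrite red_winvK red_winvKr -[winv _ ++ take _ _]cats0 -catA red_cat_winvK cats0 red_id //.
by rewrite size_take size_drop /len; case: ltnP; lia.
Qed.

Lemma overlap_shape p l1 l2 l3 (k := canc (lword p l1) (lword p l2)) :
  no_shortening p -> 0 < len p.1 -> 0 < len p.2 -> l2 != linv l1 -> l3 != linv l2 ->
  size (lword p l2) <= k + canc (lword p l2) (lword p l3) ->
  [/\ l1.1 != l2.1, size (lword p l2) = 2 * k, 0 < k,
      k <= canc (lword p l2) (lword p l1) & 2 * k <= size (lword p l1)].
Proof.
move=> ns a_gt0 b_gt0 l21 l32 ovl.
have [c12 c12' s12] := canc_half ns a_gt0 b_gt0 l21.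
have [c23 c23' s23] := canc_half ns a_gt0 b_gt0 l32.
have l12 : l1.1 != l2.1 by apply/eqP => /s12; lia.
have l23 : l2.1 != l3.1.
  apply/eqP => e23; have [l3E|l3E] := letter_fst_eq e23; last by rewrite l3E eqxx in l32.
  by move: ovl s23; rewrite l3E => ovl /(_ erefl); lia.
have size_v : size (lword p l2) = 2 * k by lia.
have k_gt0 : 0 < k by move: size_v; rewrite size_lword; case: ifP; lia.
have [l3E|l3E] : l3 = l1 \/ l3 = linv l1.
  by apply: letter_fst_eq; move: l12 l23; case: l1.1; case: l2.1; case: l3.1.
  by subst l3; split=> //; lia.
have := canc_overlap_winv (lword_reduced p l2) size_v k_gt0 (leqnn k).
by rewrite -lword_linv -l3E; lia.
Qed.

Lemma fixes_AK3_overlap p l1 l2 k :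
  (forall q, len q.1 + len q.2 < len p.1 + len p.2 -> generates q -> fixes_AK3 q) ->
  generates p -> l1.1 != l2.1 -> size (lword p l2) = 2 * k -> 0 < k ->
  k <= canc (lword p l1) (lword p l2) -> k <= canc (lword p l2) (lword p l1) ->
  2 * k <= size (lword p l1) -> fixes_AK3 p.
Proof.
move=> IH gen_p l12 size_v k_gt0 k12 k21 k_le; set c := of_word (take k (lword p l2)).
have vc : val c = take k (lword p l2).
  rewrite /= red_id //; apply: (@reduced_catl _ (drop k (lword p l2))).
  by rewrite cat_take_drop lword_reduced.
apply: (fixes_AK3_cnjV (c := c)); apply: (fixes_AK3_nielsenV (l1 := linv l1) (l2 := linv l2)).
  by rewrite !linv_fst.
apply: IH; last by apply: generates_nielsen; [rewrite !linv_fst | apply: generates_cnj].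
rewrite len_nielsen_move ?linv_fst // !limg_linv -invFM !len_invF -!(hom_limg _ _ (cnj_hom c)).
rewrite -(cnj_hom c) (len_cnj_overlap (k := k)) // (len_limg_pair p l12).
by have := len_cnj_prefix vc; rewrite /len -/(lword p l1) -/(lword p l2); lia.
Qed.

Lemma fixes_AK3_generates p : generates p -> fixes_AK3 p.
Proof.
move: {2}(len p.1 + len p.2) (leqnn (len p.1 + len p.2)) => n.
elim: n p => [|n IH] p size_p gen_p; have [a_gt0 b_gt0] := generates_len_gt0 gen_p; first lia.
have {}IH q : len q.1 + len q.2 < len p.1 + len p.2 -> generates q -> fixes_AK3 q.
  by move=> lt_q; apply: IH; lia.
case: (boolP [exists l1 : letter, exists l2 : letter,
    (l1.1 != l2.1) && (len (mulF (limg p l1) (limg p l2)) < len (limg p l1))]).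
  case/existsP => l1 /existsP[l2 /andP[l12 short]].
  apply: (fixes_AK3_nielsenV l12); apply: IH; last exact: generates_nielsen.
  by rewrite len_nielsen_move // (len_limg_pair p l12); lia.
move=> /existsPn long; have ns : no_shortening p.
  by move=> l1 l2 l12; have /existsPn/(_ l2) := long l1; rewrite l12 -leqNgt.
case: (boolP [exists l1, exists l2, exists l3, [&& l2 != linv l1, l3 != linv l2 &
    size (lword p l2) <= canc (lword p l1) (lword p l2) + canc (lword p l2) (lword p l3)]]).
  case/existsP => l1 /existsP[l2 /existsP[l3 /and3P[l21 l32 ovl]]].
  have [l12 size_v k_gt0 k21 k_le] := overlap_shape ns a_gt0 b_gt0 l21 l32 ovl.
  exact: fixes_AK3_overlap IH gen_p l12 size_v k_gt0 (leqnn _) k21 k_le.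
move=> /existsPn no_overlap_p; have nov : no_overlap p.
  move=> l1 l2 l3 l21 l32; have /existsPn/(_ l2)/existsPn/(_ l3) := no_overlap_p l1.
  by rewrite l21 l32 -ltnNge.
have [l Xl] := limg_of_len1 (g := X) gen_p ns a_gt0 b_gt0 nov erefl.
have [l' Yl'] := limg_of_len1 (g := Y) gen_p ns a_gt0 b_gt0 nov erefl.
exact: fixes_AK3_letters Xl Yl'.
Qed.

Theorem corollary8 (u v : F) (phi : F -> F) :
  ac_equiv (u, v) AK3 -> is_aut phi -> ac_equiv (phi u, phi v) AK3.
Proof.
move=> uv_AK3 [phiM [psi phiK psiK]].
have gen_phi : generates (phi X, phi Y).
  by move=> g; exists (psi g); rewrite -(hom_endo _ phiM) psiK.
apply: ac_trans (ac_equiv_hom phiM uv_AK3) _.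
by have := fixes_AK3_generates gen_phi; rewrite /fixes_AK3 /pmap -!(hom_endo _ phiM).
Qed.
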